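(* Let $n\ge 3$, let $a_0,\ldots,a_{n-1}$ be indeterminates over $\mathbb{Q}$, $f=x^n+a_{n-1}x^{n-1}+\cdots+a_0$, and let $D_2\in\mathbb{Q}[a_0,\ldots,a_{n-1}]$ be the polynomial obtained by expressing $\prod_{1\le i,j,k\le n,\ i<j,\ j\ne k,\ k\ne i}(2r_k-r_i-r_j)$ ($r_1,\ldots,r_n$ the roots of $f$) in terms of $a_0,\ldots,a_{n-1}$ via Vieta's formulas. Then, in $\mathbb{Q}[a_0,\ldots,a_{n-1},x,y,w]$, \[D_2\in\left\langle f(x),f(y),f\left(\tfrac{x+y}{2}\right),w(x-y)-1\right\rangle\cap\mathbb{Q}[a_0,\ldots,a_{n-1}].\]
   Context: $\langle g_1,\ldots,g_m\rangle$ is the ideal generated by $g_1,\ldots,g_m$. *)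

From HB Require Import structures.
From mathcomp Require Import all_boot all_order all_algebra.
From mathcomp Require Import mpoly.
Set Implicit Arguments. Unset Strict Implicit. Unset Printing Implicit Defensive.
Import Order.TTheory GRing.Theory Num.Theory.
Local Open Scope ring_scope.

Definition in_ideal (R : comRingType) (m : nat) (g : 'I_m -> R) (p : R) : Prop :=
  exists c : 'I_m -> R, p = \sum_(i < m) c i * g i.

(* Polynomials in the roots r_0,...,r_{n-1}: {mpoly rat[n]}, r_k = 'X_k. *)
(* Vieta substitution: the coefficient variable a_i (i < n) of the monic
   f = x^n + a_{n-1} x^{n-1} + ... + a_0 = prod_k (x - r_k)
   is sent to (-1)^(n-i) e_{n-i}(r_0,...,r_{n-1}). *)
Definition vieta (n : nat) (P : {mpoly rat[n]}) : {mpoly rat[n]} :=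
  P \mPo [tuple ((-1) ^+ (n - i) *: mesym n rat (n - i)) | i < n].

Definition D2roots (n : nat) : {mpoly rat[n]} :=
  \prod_(i < n) \prod_(j < n | (i < j)%N)
     \prod_(k < n | (k != i) && (k != j)) (2%:R *: 'X_k - 'X_i - 'X_j).

Definition var_a (n : nat) (i : 'I_n) : {mpoly rat[n + 3]} := 'X_(lshift 3 i).
Definition var_x (n : nat) : {mpoly rat[n + 3]} := 'X_(rshift n (0 : 'I_3)).
Definition var_y (n : nat) : {mpoly rat[n + 3]} := 'X_(rshift n (1 : 'I_3)).
Definition var_w (n : nat) : {mpoly rat[n + 3]} := 'X_(rshift n (2 : 'I_3)).

Definition embed_a (n : nat) (P : {mpoly rat[n]}) : {mpoly rat[n + 3]} :=
  P \mPo [tuple var_a i | i < n].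

Definition f_at (n : nat) (t : {mpoly rat[n + 3]}) : {mpoly rat[n + 3]} :=
  t ^+ n + \sum_(i < n) var_a i * t ^+ i.

Definition gens (n : nat) (i : 'I_4) : {mpoly rat[n + 3]} :=
  match val i with
  | 0 => f_at (var_x n)
  | 1 => f_at (var_y n)
  | 2 => f_at ((2%:R)^-1 *: (var_x n + var_y n))
  | _ => var_w n * (var_x n - var_y n) - 1
  end.

From mathcomp Require Import all_boot all_algebra perm.
From mathcomp Require Import mpoly ring.
Set Implicit Arguments. Unset Strict Implicit. Unset Printing Implicit Defensive.
Import GRing.Theory.
Local Open Scope ring_scope.

(** Modulo the ideal, f(x) = f(y) = f((x+y)/2) = 0 and x - y is invertible, so
  dividing f by (X - x)(X - y)(X - (x+y)/2) leaves a remainder whose coefficients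
  lie in the ideal: coefficientwise f is congruent to (X - x)(X - y)(X - (x+y)/2) k
  with k monic of degree n - 3, and D_2(a) is congruent to D_2 evaluated at the
  coefficients of that product.  This value is 0: when k splits with roots z_j,
  Vieta's formulas turn it into the root product at (x, y, (x+y)/2, z), which has
  the factor 2 (x+y)/2 - x - y; a general k is a specialisation of the generic
  monic polynomial, whose non-leading coefficients are algebraically independent
  by the fundamental theorem of symmetric polynomials.  The same theorem yields
  D_2 itself, as the root product is symmetric. *)

Section IdealClosure.
Variables (R : comNzRingType) (m : nat) (g : 'I_m -> R).
Local Notation J := (in_ideal g).

Lemma in_ideal0 : J 0.
Proof. by exists (fun _ => 0); rewrite big1 // => i _; rewrite mul0r. Qed.

Lemma in_idealD p q : J p -> J q -> J (p + q).
Proof.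
move=> [c ->] [c' ->]; exists (fun i => c i + c' i).
by rewrite -big_split; apply: eq_bigr => i _; rewrite mulrDl.
Qed.

Lemma in_idealMl a p : J p -> J (a * p).
Proof.
move=> [c ->]; exists (fun i => a * c i).
by rewrite mulr_sumr; apply: eq_bigr => i _; rewrite mulrA.
Qed.

Lemma in_idealMr a p : J p -> J (p * a).
Proof. by rewrite mulrC; apply: in_idealMl. Qed.

Lemma in_idealB p q : J p -> J q -> J (p - q).
Proof. by move=> Jp Jq; apply: in_idealD => //; rewrite -mulN1r; apply: in_idealMl. Qed.

Lemma in_ideal_gen i : J (g i).
Proof.
exists (fun j => (j == i)%:R); rewrite (bigD1 i) //= eqxx mul1r big1 ?addr0 //.
by move=> j /negbTE ->; rewrite mul0r.
Qed.

Lemma in_ideal_sum (I : Type) (r : seq I) (P : pred I) (F : I -> R) :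
  (forall i, P i -> J (F i)) -> J (\sum_(i <- r | P i) F i).
Proof. by move=> JF; apply: big_ind => //; [apply: in_ideal0 | apply: in_idealD]. Qed.

Lemma in_ideal_cancel w u c : J (w * u - 1) -> J (c * u) -> J c.
Proof.
move=> Jwu Jcu; have -> : c = w * (c * u) - c * (w * u - 1) by ring.
by apply: in_idealB; apply: in_idealMl.
Qed.

Lemma in_ideal_subM a a' b b' :
  J (a - a') -> J (b - b') -> J (a * b - a' * b').
Proof.
move=> Ja Jb; have -> : a * b - a' * b' = a * (b - b') + (a - a') * b' by ring.
by apply: in_idealD; [apply: in_idealMl | apply: in_idealMr].
Qed.

Lemma in_ideal_subX a b k : J (a - b) -> J (a ^+ k - b ^+ k).
Proof.
move=> Jab; elim: k => [|k IHk]; first by rewrite !expr0 subrr; apply: in_ideal0.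
by rewrite !exprS; apply: in_ideal_subM.
Qed.

Lemma in_ideal_sub_mmap k (S : nzRingType) (f : S -> R) (u v : 'I_k -> R)
    (P : {mpoly S[k]}) :
  (forall i, J (u i - v i)) -> J (mmap f u P - mmap f v P).
Proof.
move=> Juv; rewrite /mmap -sumrB; apply: in_ideal_sum => mo _.
rewrite -mulrBr; apply: in_idealMl; rewrite /mmap1.
apply: (big_ind2 (fun a b => J (a - b))) => [|a a' b b'|i _].
- by rewrite subrr; apply: in_ideal0.
- exact: in_ideal_subM.
- exact: in_ideal_subX.
Qed.

End IdealClosure.

Lemma rmorph_mmap n (R S T : nzRingType) (f : R -> S)
    (h : 'I_n -> S) (g : {rmorphism S -> T}) (p : {mpoly R[n]}) :
  g (mmap f h p) = mmap (g \o f) (g \o h) p.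
Proof.
rewrite /mmap rmorph_sum; apply: eq_bigr => mo _.
rewrite rmorphM /mmap1 rmorph_prod; congr (_ * _); apply: eq_bigr => i _.
exact: rmorphXn.
Qed.

Lemma eq_mmap n (R S : nzRingType) (f1 f2 : R -> S) (h1 h2 : 'I_n -> S)
    (p : {mpoly R[n]}) :
  f1 =1 f2 -> h1 =1 h2 -> mmap f1 h1 p = mmap f2 h2 p.
Proof.
move=> ef eh; rewrite /mmap; apply: eq_bigr => mo _.
by rewrite ef (mmap1_eq _ eh).
Qed.

Lemma mmap_comp_mpoly n k (R S : comNzRingType)
    (f : {rmorphism R -> S}) (h : 'I_n -> S) (p : {mpoly R[k]})
    (lq : k.-tuple {mpoly R[n]}) :
  mmap f h (p \mPo lq) = mmap f (fun i => mmap f h (tnth lq i)) p.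
Proof.
rewrite [LHS](rmorph_mmap _ _ (mmap f h)).
by apply: eq_mmap => // c /=; rewrite mmapC.
Qed.

Lemma comp_mpolyA n k l (R : comNzRingType) (p : {mpoly R[k]})
    (lq : k.-tuple {mpoly R[n]}) (lr : n.-tuple {mpoly R[l]}) :
  (p \mPo lq) \mPo lr = p \mPo [tuple tnth lq i \mPo lr | i < k].
Proof.
rewrite {1}/comp_mpoly mmap_comp_mpoly /comp_mpoly.
by apply: eq_mmap => // i; rewrite tnth_mktuple.
Qed.

Lemma mmap_mesym n (R S : nzRingType) (T : comNzRingType)
    (f : {rmorphism R -> T}) (g : {rmorphism S -> T}) (h : 'I_n -> T) k :
  mmap f h (mesym n R k) = mmap g h (mesym n S k).
Proof.
by rewrite !mesymE !raddf_sum /=; apply: eq_bigr => s _; rewrite !mmapX.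
Qed.

Section MonicWithCoefs.
Variables (R : nzRingType) (n : nat) (c : 'I_n -> R).

Definition mkmonic : {poly R} := 'X^n + \sum_(i < n) c i *: 'X^i.

Let size_lower : (size (\sum_(i < n) c i *: 'X^i : {poly R})%R <= n)%N.
Proof.
apply: (leq_trans (size_sum _ _ _)); apply/bigmax_leqP => i _.
by apply: (leq_trans (size_scale_leq _ _)); rewrite size_polyXn.
Qed.

Lemma size_mkmonic : size mkmonic = n.+1.
Proof. by rewrite size_polyDl ?size_polyXn // ltnS. Qed.

Lemma monic_mkmonic : mkmonic \is monic.
Proof.
by apply/monicP; rewrite lead_coefDl ?lead_coefXn // size_polyXn ltnS.
Qed.

Lemma coef_mkmonic (i : 'I_n) : mkmonic`_i = c i.
Proof.
rewrite coefD coefXn ltn_eqF // add0r coef_sum (bigD1 i) //= coefZ coefXn eqxx.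
rewrite mulr1 big1 ?addr0 // => j ji.
by rewrite coefZ coefXn eq_sym (inj_eq val_inj) (negbTE ji) mulr0.
Qed.

Lemma horner_mkmonic t : mkmonic.[t] = t ^+ n + \sum_(i < n) c i * t ^+ i.
Proof.
rewrite hornerD hornerXn horner_sum; congr (_ + _).
by apply: eq_bigr => i _; rewrite hornerZ hornerXn.
Qed.

End MonicWithCoefs.

Lemma map_mkmonic (R S : nzRingType) (f : {rmorphism R -> S}) n (c : 'I_n -> R) :
  map_poly f (mkmonic c) = mkmonic (f \o c).
Proof.
rewrite rmorphD rmorphXn /= map_polyX rmorph_sum; congr (_ + _).
by apply: eq_bigr => i _; rewrite -mul_polyC rmorphM /= map_polyC map_polyXn mul_polyC.
Qed.

Lemma eq_mkmonic (R : nzRingType) n (c1 c2 : 'I_n -> R) :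
  c1 =1 c2 -> mkmonic c1 = mkmonic c2.
Proof.
by move=> ec; rewrite /mkmonic; congr (_ + _); apply: eq_bigr => i _; rewrite ec.
Qed.

Lemma mkmonicE (R : nzRingType) n (k : {poly R}) :
  k \is monic -> size k = n.+1 -> mkmonic (fun i : 'I_n => k`_i) = k.
Proof.
move=> /monicP k1 sk; apply/polyP => i.
have [lt_in | le_ni] := ltnP i n; first by rewrite (coef_mkmonic _ (Ordinal lt_in)).
have [-> | ne_in] := eqVneq i n.
  have := monicP (monic_mkmonic (fun i : 'I_n => k`_i)).
  by rewrite /lead_coef size_mkmonic sk in k1 * => ->.
by rewrite !nth_default ?size_mkmonic ?sk // ltn_neqAle eq_sym ne_in.
Qed.

Definition prodXsubC3 (R : nzRingType) (a b c : R) : {poly R} :=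
  ('X - a%:P) * ('X - b%:P) * ('X - c%:P).

Lemma map_prodXsubC3 (R S : nzRingType) (f : {rmorphism R -> S}) a b c :
  map_poly f (prodXsubC3 a b c) = prodXsubC3 (f a) (f b) (f c).
Proof. by rewrite !rmorphM /= !map_polyXsubC. Qed.

Lemma monic_divXsubC (R : comNzRingType) (p : {poly R}) a k :
  p \is monic -> size p = k.+2 ->
  exists2 q, q \is monic /\ size q = k.+1 & p = q * ('X - a%:P) + (p.[a])%:P.
Proof.
move=> mp sp; have : root (p - (p.[a])%:P) a by rewrite rootE !hornerE subrr.
case/factor_theorem => q eq.
have small_pa : (size (- (p.[a])%:P) < size p)%N.
  by rewrite size_polyN (leq_ltn_trans (size_polyC_leq1 _)) // sp.
have s_pa : size (p - (p.[a])%:P) = k.+2 by rewrite size_polyDl // sp.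
have q_neq0 : q != 0 by apply: contra_eq_neq s_pa => q0; rewrite eq q0 mul0r size_poly0.
exists q; last by rewrite -eq subrK.
split; last first.
  by move: s_pa; rewrite eq size_Mmonic ?monicXsubC // size_XsubC addn2 => -[].
apply/monicP; rewrite -(lead_coef_Mmonic q (monicXsubC a)) -eq.
by rewrite lead_coefDl // (monicP mp).
Qed.

Section DivisionModIdeal.
Variables (R : comNzRingType) (m : nat) (g : 'I_m -> R).
Local Notation J := (in_ideal g).

Lemma midpoint_division_mod_ideal (F : {poly R}) k a b c w :
    F \is monic -> size F = k.+4 -> c *+ 2 = a + b ->
    J F.[a] -> J F.[b] -> J F.[c] -> J (w * (a - b) - 1) ->
  exists2 q : {poly R}, q \is monic /\ size q = k.+1 &
    forall i, J (F`_i - (prodXsubC3 a b c * q)`_i).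
Proof.
move=> mF sF c_mid JFa JFb JFc Jw.
have [q1 [m1 s1] e1] := monic_divXsubC a mF sF.
have [q2 [m2 s2] e2] := monic_divXsubC b m1 s1.
have [q [m3 s3] e3] := monic_divXsubC c m2 s2.
exists q => // i.
set r0 := F.[a] in e1 JFa *; set r1 := q1.[b] in e2; set r2 := q2.[c] in e3.
have Fb : F.[b] - r0 = r1 * (b - a) by rewrite {1}e1 !hornerE addrK.
have Fc : F.[c] - r0 - r1 * (c - a) = r2 * (c - b) * (c - a).
  by rewrite {1}e1 e2 !hornerE -/r2 addrK; ring.
have unit_ba : J (- w * (b - a) - 1) by rewrite (_ : _ - 1 = w * (a - b) - 1) //; ring.
have unit_ca : J (- (w *+ 2) * (c - a) - 1).
  rewrite (_ : _ - 1 = w * (a - b) - 1 - w * (c *+ 2 - (a + b))); last by ring.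
  by rewrite c_mid subrr mulr0 subr0.
have unit_cb : J (w *+ 2 * (c - b) - 1).
  rewrite (_ : _ - 1 = w * (a - b) - 1 + w * (c *+ 2 - (a + b))); last by ring.
  by rewrite c_mid subrr mulr0 addr0.
have Jr1 : J r1 by apply: in_ideal_cancel unit_ba _; rewrite -Fb; apply: in_idealB.
have Jr2 : J r2.
  apply: in_ideal_cancel unit_cb _; apply: in_ideal_cancel unit_ca _.
  by rewrite -Fc; do 2?apply: in_idealB => //; apply: in_idealMr.
rewrite -coefB; have -> : F - prodXsubC3 a b c * q =
    r2%:P * (('X - a%:P) * ('X - b%:P)) + r1%:P * ('X - a%:P) + r0%:P.
  by rewrite {1}e1 e2 e3 /prodXsubC3; ring.
rewrite !coefD !coefCM coefC.
apply: in_idealD; first by apply: in_idealD; apply: in_idealMr.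
by case: eqP => _; [apply: JFa | apply: in_ideal0].
Qed.

End DivisionModIdeal.

Section SignedMesym.
Variables (n : nat) (R : comNzRingType).

Definition signed_mesym : n.-tuple {mpoly R[n]} :=
  [tuple (-1) ^+ (n - i) *: mesym n R (n - i) | i < n].

(* [vieta P] is [P \mPo signed_mesym n rat]; the substitution [W], with inverse
   [W'], turns composition with [signed_mesym] into composition with the
   library's [[tuple 's_i.+1 | i < n]]. *)
Let W : n.-tuple {mpoly R[n]} := [tuple (-1) ^+ (n - i) *: 'X_(rev_ord i) | i < n].
Let W' : n.-tuple {mpoly R[n]} := [tuple (-1) ^+ i.+1 *: 'X_(rev_ord i) | i < n].

Let comp_W p : p \mPo signed_mesym = (p \mPo W) \mPo [tuple mesym n R i.+1 | i < n].
Proof.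
rewrite comp_mpolyA; congr (p \mPo _); apply: eq_from_tnth => i.
by rewrite !tnth_mktuple comp_mpolyZ comp_mpolyXU -tnth_nth tnth_mktuple /= subnSK.
Qed.

Let comp_WW' p : (p \mPo W) \mPo W' = p.
Proof.
rewrite comp_mpolyA -[RHS]comp_mpoly_id; congr (p \mPo _); apply: eq_from_tnth => i.
rewrite !tnth_mktuple comp_mpolyZ comp_mpolyXU -tnth_nth tnth_mktuple rev_ordK.
by rewrite scalerA /= subnSK // -expr2 sqrr_sign scale1r.
Qed.

Let comp_W'W p : (p \mPo W') \mPo W = p.
Proof.
rewrite comp_mpolyA -[RHS]comp_mpoly_id; congr (p \mPo _); apply: eq_from_tnth => i.
rewrite !tnth_mktuple comp_mpolyZ comp_mpolyXU -tnth_nth tnth_mktuple rev_ordK.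
by rewrite scalerA /= subKn // -expr2 sqrr_sign scale1r.
Qed.

Lemma comp_signed_mesym_eq0 p : p \mPo signed_mesym = 0 -> p = 0.
Proof.
by rewrite comp_W => /msym_fundamental_un0 pW0; rewrite -[p]comp_WW' pW0 comp_mpoly0.
Qed.

Lemma comp_signed_mesym_sym p : p \is symmetric -> exists q, q \mPo signed_mesym = p.
Proof.
by case/sym_fundamental => t [tS _]; exists (t \mPo W'); rewrite comp_W comp_W'W.
Qed.

End SignedMesym.

Lemma coef_prod_XsubC_mesym (R : idomainType) k (z : 'I_k -> R) i : (i <= k)%N ->
  (\prod_(j < k) ('X - (z j)%:P))`_i = (-1) ^+ (k - i) * (mesym k R (k - i)).@[z].
Proof.
move=> le_ik; have lt_ki : (k - i < k.+1)%N by rewrite ltnS leq_subr.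
have := mroots_coeff [tuple z j | j < k] (Ordinal lt_ki).
rewrite (_ : (k - Ordinal lt_ki)%N = i) ?subKn // big_tuple => coef_roots.
rewrite (eq_bigr (fun j => 'X - (tnth [tuple z j | j < k] j)%:P)) => [|j _].
  by rewrite coef_roots; congr (_ * _); apply: meval_eq => j; rewrite tnth_mktuple.
by rewrite tnth_mktuple.
Qed.

Lemma coef_prod_XsubCX (R : idomainType) k (i : 'I_k) :
  (\prod_(j < k) ('X - ('X_j)%:P) : {poly {mpoly R[k]}})`_i = tnth (signed_mesym k R) i.
Proof.
rewrite coef_prod_XsubC_mesym 1?ltnW // tnth_mktuple -mul_mpolyC rmorph_sign.
congr (_ * _); rewrite /meval (mmap_mesym _ (@mpolyC k R)) -[RHS]comp_mpoly_id.
by apply: eq_mmap => // j; rewrite tnth_mktuple.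
Qed.

Lemma coef_prod_XsubCX_independent (R : idomainType) k (Q : {mpoly R[k]}) :
  Q \mPo [tuple (\prod_(j < k) ('X - ('X_j)%:P))`_i | i < k] = 0 -> Q = 0.
Proof.
move=> Q0; apply: comp_signed_mesym_eq0; rewrite -[RHS]Q0.
congr (Q \mPo _); apply: eq_from_tnth => i.
by rewrite !tnth_mktuple coef_prod_XsubCX tnth_mktuple.
Qed.

Lemma mmap_vieta (S : idomainType) (iota : {rmorphism rat -> S}) k (z : 'I_k -> S)
    (P : {mpoly rat[k]}) :
  mmap iota z (vieta P) = mmap iota (fun i => (\prod_(j < k) ('X - (z j)%:P))`_i) P.
Proof.
rewrite /vieta /comp_mpoly mmap_comp_mpoly; apply: eq_mmap => // i.
rewrite tnth_mktuple mmapZ rmorph_sign (mmap_mesym _ (@idfun S)).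
by rewrite coef_prod_XsubC_mesym 1?ltnW.
Qed.

Section D2rootsSymmetric.
Variable n : nat.

Let pair_set (p : 'I_n * 'I_n) : {set 'I_n} := [set p.1; p.2].

Let pair_set_inj : {in [set p : 'I_n * 'I_n | (p.1 < p.2)%N] &, injective pair_set}.
Proof.
move=> [a b] [c e]; rewrite !inE /pair_set /= => lt_ab lt_ce eq_ab_ce.
have : a \in [set c; e] by rewrite -eq_ab_ce !inE eqxx.
have : b \in [set c; e] by rewrite -eq_ab_ce !inE eqxx orbT.
have : c \in [set a; b] by rewrite eq_ab_ce !inE eqxx.
rewrite !inE => /orP[] /eqP ? /orP[] /eqP ? /orP[] /eqP ?; subst => //;
  by [ rewrite ltnn in lt_ab | rewrite ltnn in lt_ce
     | have := ltn_trans lt_ab lt_ce; rewrite ltnn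
     | have := ltn_trans lt_ce lt_ab; rewrite ltnn ].
Qed.

Let card2_pair_set : [set h : {set 'I_n} | #|h| == 2] =
  pair_set @: [set p : 'I_n * 'I_n | (p.1 < p.2)%N].
Proof.
apply/setP => h; rewrite inE; apply/idP/imsetP => [/cards2P[a [b [ab ->]]]|].
  case: (ltngtP a b) => [lt_ab|lt_ba|eq_ab]; last by rewrite (val_inj eq_ab) eqxx in ab.
    by exists (a, b); rewrite ?inE.
  by exists (b, a); rewrite ?inE // /pair_set setUC.
case=> [[a b]]; rewrite inE /= => lt_ab ->.
by rewrite cards2 -(inj_eq val_inj) /= neq_ltn lt_ab.
Qed.

Lemma D2roots_pairsE : D2roots n = \prod_(h : {set 'I_n} | #|h| == 2)
  \prod_(k | k \notin h) (2%:R *: 'X_k - \sum_(l in h) 'X_l).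
Proof.
rewrite /D2roots pair_big_dep /=.
rewrite (eq_bigl (fun h => h \in [set h : {set 'I_n} | #|h| == 2])); last first.
  by move=> h; rewrite inE.
rewrite card2_pair_set big_imset /=; last exact: pair_set_inj.
apply: eq_big => [p|[a b] /= lt_ab]; first by rewrite inE.
have a_notin_b : a \notin [set b] by rewrite inE -(inj_eq val_inj) /= neq_ltn lt_ab.
apply: eq_big => [k|k _]; first by rewrite !inE negb_or.
by rewrite big_setU1 //= big_set1 opprD addrA.
Qed.

Lemma D2roots_sym : D2roots n \is symmetric.
Proof.
apply/issymP => s; have msymX i : msym s ('X_i : {mpoly rat[n]}) = 'X_(s i).
  rewrite msymX; congr 'X_[_]; apply/mnmP => j; rewrite mnmE !mnm1E.
  by congr (nat_of_bool _); apply/eqP/eqP => [->|<-]; rewrite ?permKV ?permK.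
rewrite D2roots_pairsE rmorph_prod [RHS](reindex_inj (imset_inj (@perm_inj _ s))) /=.
apply: eq_big => [h|h _]; first by rewrite card_imset //; apply: perm_inj.
rewrite rmorph_prod [RHS](reindex_inj (@perm_inj _ s)) /=.
apply: eq_big => [k|k _]; first by rewrite mem_imset //; apply: perm_inj.
rewrite rmorphB /= msymZ msymX rmorph_sum big_imset /=; last first.
  by move=> ? ? _ _; apply: perm_inj.
by congr (_ - _); apply: eq_bigr => l _; rewrite msymX.
Qed.

End D2rootsSymmetric.

Lemma mmap_D2roots_eq0 n (S : comNzRingType) (iota : {rmorphism rat -> S})
    (r : 'I_n -> S) (i j k : 'I_n) :
    (i < j)%N -> k != i -> k != j -> r k *+ 2 = r i + r j ->
  mmap iota r (D2roots n) = 0.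
Proof.
move=> lt_ij ki kj rk_mid; rewrite /D2roots !rmorph_prod (bigD1 i) //= rmorph_prod.
rewrite (bigD1 j) //= rmorph_prod (bigD1 k) /= ?ki ?kj //.
rewrite !rmorphB /= mmapZ !mmapX !mmap1U rmorph_nat mulr_natl rk_mid.
have -> : r i + r j - r i - r j = 0 by ring.
by rewrite !mul0r.
Qed.

Section D2Vanishing.
Variables (d : nat) (D : {mpoly rat[d.+3]}).
Hypothesis vieta_D : vieta D = D2roots d.+3.

Lemma D2_split_coef_eq0 (S : idomainType) (iota : {rmorphism rat -> S})
    (a b c : S) (z : 'I_d -> S) :
    c *+ 2 = a + b ->
  mmap iota (fun i => (prodXsubC3 a b c * \prod_(j < d) ('X - (z j)%:P))`_i) D = 0.
Proof.
move=> c_mid; pose r (i : 'I_d.+3) := nth 0 [:: a, b, c & [seq z j | j <- enum 'I_d]] i.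
have split_r : \prod_(i < d.+3) ('X - (r i)%:P) =
    prodXsubC3 a b c * \prod_(j < d) ('X - (z j)%:P).
  rewrite !big_ord_recl /prodXsubC3 !mulrA; congr (_ * _); apply: eq_bigr => j _.
  by rewrite /r !lift0 /= (nth_map j) ?nth_ord_enum ?size_enum_ord.
rewrite -split_r -mmap_vieta vieta_D.
exact: (@mmap_D2roots_eq0 _ _ _ _ ord0 (Ordinal (isT : (1 < d.+3)%N))
  (Ordinal (isT : (2 < d.+3)%N))).
Qed.

Lemma D2_generic_coef_eq0 (R : idomainType) (iota : {rmorphism rat -> R}) (a b c : R) :
    c *+ 2 = a + b ->
  mmap (@mpolyC d R \o iota)
    (fun i => (prodXsubC3 a%:MP b%:MP c%:MP * mkmonic (fun j => 'X_j))`_i) D = 0.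
Proof.
move=> c_mid; pose roots : d.-tuple {mpoly R[d]} :=
  [tuple (\prod_(j < d) ('X - ('X_j)%:P))`_i | i < d].
apply: (coef_prod_XsubCX_independent (k := d)).
rewrite [LHS](rmorph_mmap _ _ (comp_mpoly roots)).
have c_midX : c%:MP *+ 2 = a%:MP + b%:MP :> {mpoly R[d]}.
  by rewrite -rmorphMn -rmorphD c_mid.
rewrite -[RHS](D2_split_coef_eq0 (comp_mpoly roots \o (@mpolyC d R \o iota))
  (fun j => 'X_j) c_midX).
apply: eq_mmap => // i /=; rewrite -coef_map rmorphM /= map_prodXsubC3 /= !comp_mpolyC.
have size_prod : size (\prod_(j < d) ('X - ('X_j)%:P) : {poly {mpoly R[d]}}) = d.+1.
  by rewrite size_prod_XsubC -[index_enum _]enumT size_enum_ord.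
rewrite map_mkmonic (eq_mkmonic (c2 := fun j => tnth roots j)).
  by rewrite (eq_mkmonic (tnth_mktuple _)) mkmonicE ?monic_prod_XsubC.
by move=> j /=; rewrite comp_mpolyXU -tnth_nth.
Qed.

Lemma D2_coef_eq0 (R : idomainType) (iota : {rmorphism rat -> R})
    (a b c : R) (k : {poly R}) :
    c *+ 2 = a + b -> k \is monic -> size k = d.+1 ->
  mmap iota (fun i => (prodXsubC3 a b c * k)`_i) D = 0.
Proof.
move=> c_mid mk sk.
have := congr1 (meval (fun j => k`_j)) (D2_generic_coef_eq0 iota c_mid).
rewrite meval0 (rmorph_mmap _ _ (meval _)) => eq0; rewrite -[RHS]eq0.
apply: eq_mmap => [x|i] /=; first exact/esym/mevalC.
rewrite -coef_map rmorphM /= map_prodXsubC3 /= !mevalC map_mkmonic.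
rewrite (eq_mkmonic (c2 := fun j => k`_j)) ?mkmonicE // => j.
exact: mevalXU.
Qed.

End D2Vanishing.

Theorem corollary2 (n : nat) (hn : (3 <= n)%N) :
  (exists D2 : {mpoly rat[n]}, vieta D2 = D2roots n) /\
  (forall D2 : {mpoly rat[n]}, vieta D2 = D2roots n ->
     in_ideal (gens n) (embed_a D2)).
Proof.
split; first by have [D <-] := comp_signed_mesym_sym (D2roots_sym n); exists D.
case: n hn => [|[|[|d]]] // _ D vieta_D.
pose F := mkmonic (@var_a d.+3).
pose h : {mpoly rat[d.+3 + 3]} := (2%:R)^-1 *: (var_x _ + var_y _).
have F_gens t : F.[t] = f_at t by rewrite horner_mkmonic.
have h_mid : h *+ 2 = var_x _ + var_y _.
  by rewrite /h scalerMnl -mulr_natr mulVf ?scale1r.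
have JF t i : gens d.+3 i = f_at t -> in_ideal (gens d.+3) F.[t].
  by move=> gi; rewrite F_gens -gi; apply: in_ideal_gen.
have [q [mq sq] Fq] := midpoint_division_mod_ideal (monic_mkmonic _) (size_mkmonic _)
  h_mid (JF _ 0 erefl) (JF _ 1 erefl) (JF _ 2 erefl) (in_ideal_gen (gens _) 3).
have -> : embed_a D = mmap (@mpolyC _ rat) (@var_a d.+3) D.
  by apply: eq_mmap => // i; rewrite tnth_mktuple.
rewrite -[X in in_ideal _ X]subr0 -(D2_coef_eq0 vieta_D (@mpolyC _ rat) h_mid mq sq).
apply: in_ideal_sub_mmap => i; rewrite -[var_a i](coef_mkmonic (@var_a _)); exact: Fq.
Qed.
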